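(* Let $P_S,H_{SR},H_{SD},H_{RD},\sigma_a^2,\sigma_b^2>0$, $\eta\in(0,1]$, assume $\sigma_R^2=\sigma_D^2=\sigma_a^2+\sigma_b^2$ and $H_{SR}>H_{SD}$, and let $\rho^{\mathrm{th}}=1-\frac{H_{SD}\sigma_b^2}{H_{SR}\sigma_D^2-H_{SD}\sigma_a^2}$. Fix $\rho\in(0,\rho^{\mathrm{th}})$ and set $C^{(PS)}_{SR}=\log\big(1+\frac{(1-\rho)P_SH_{SR}}{(1-\rho)\sigma_a^2+\sigma_b^2}\big)$, $m=P_SH_{SD}/\sigma_D^2$, $b=C_{SD}=\log(1+m)$, $a'=C^{(PS)}_{SR}-C_{SD}$, $c'=\eta\rho H_{SR}H_{RD}P_S/\sigma_D^2$. Then the problem $$\max_{\lambda\in(0,1)}\min\Big\{\lambda C^{(PS)}_{SR},\ \lambda b+(1-\lambda)\log\Big(1+m+\frac{c'\lambda}{1-\lambda}\Big)\Big\}$$ is solved by $\lambda^*=\max\{\lambda_1,\lambda_2\}$, where $$\lambda_1=\frac{-\frac1{a'}\mathcal W_{-1}\!\big(-\frac{a'}{c'}e^{-\frac{a'(1+m)}{c'}}\big)-\frac{1+m}{c'}}{1-\frac1{a'}\mathcal W_{-1}\!\big(-\frac{a'}{c'}e^{-\frac{a'(1+m)}{c'}}\big)-\frac{1+m}{c'}},\qquad \lambda_2=\frac{e^{\mathcal W_0\left(\frac{c'-(1+m)}{e^{1+b}}\right)+b+1}-(1+m)}{e^{\mathcal W_0\left(\frac{c'-(1+m)}{e^{1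+b}}\right)+b+1}+c'-(1+m)}.$$
   Context: $\log$ is the natural logarithm; $\mathcal W_0,\mathcal W_{-1}$ are the principal and lower real branches of the Lambert W function. This is the power-splitting relay protocol with energy accumulation (maximal ratio combining) at the destination for fixed power-splitting ratio $\rho$, with relay forwarding power $\eta\rho H_{SR}P_S\lambda/(1-\lambda)$. *)

From Stdlib Require Import Reals Lra ClassicalEpsilon.
Open Scope R_scope.

(* Principal real branch of Lambert W: for x >= -1/e, the unique w >= -1
   with w * exp w = x (chosen by Hilbert's epsilon; unspecified outside). *)
Definition LambertW0 (x : R) : R :=
  epsilon (inhabits 0) (fun w => -1 <= w /\ w * exp w = x).

(* Lower real branch of Lambert W: for -1/e <= x < 0, the unique w <= -1
   with w * exp w = x. *)
Definition LambertWm1 (x : R) : R :=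
  epsilon (inhabits 0) (fun w => w <= -1 /\ w * exp w = x).

Definition ps_objective (CSR b m c' lam : R) : R :=
  Rmin (lam * CSR) (lam * b + (1 - lam) * ln (1 + m + c' * lam / (1 - lam))).

(* The first term of the objective is the increasing line [lam * CSR]; the
   second, [mrc_rate], is concave in [lam].  Writing [t = lam / (1 - lam)], the
   difference of the two is [(1 - lam)] times the concave function
   [ln (1 + m + c t) - a' t], which is positive at [t = 0] and has its positive
   root at [-W_{-1}(..)/a' - (1 + m)/c']; hence the curves cross exactly once, at
   [lam1].  Setting the derivative of the concave term to zero gives an equation
   [w e^w = (c' - 1 - m)/e^{1+b}] whose solution [W_0] yields its peak [lam2].
   The max-min is at the peak if the peak lies left of the crossing (where the
   line dominates), and at the crossing otherwise. *)
From Stdlib Require Import Reals Lra ClassicalEpsilon.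
Open Scope R_scope.

Lemma LambertW0_spec y : - exp (-1) < y ->
  -1 < LambertW0 y /\ LambertW0 y * exp (LambertW0 y) = y.
Proof.
  intro Hy.
  assert (HW : -1 <= LambertW0 y /\ LambertW0 y * exp (LambertW0 y) = y).
  { unfold LambertW0; apply epsilon_spec.
    set (V := Rabs y + 1).
    assert (HV : y < V * exp V).
    { pose proof (Rle_abs y). pose proof (Rabs_pos y). pose proof (exp_ineq1_le V).
      unfold V in *; nra. }
    assert (Hcont : continuity (fun w => w * exp w - y)) by reg.
    destruct (IVT _ (-1) V Hcont) as [z [Hz Hfz]];
      [unfold V; pose proof (Rabs_pos y); lra | lra | lra |].
    exists z; lra. }
  destruct HW as [[Hlt | Heq] HWy]; [tauto |].
  rewrite <- Heq in HWy; lra.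
Qed.

Lemma LambertWm1_spec y : - exp (-1) < y < 0 ->
  LambertWm1 y <= -1 /\ LambertWm1 y * exp (LambertWm1 y) = y.
Proof.
  intro Hy. unfold LambertWm1. apply epsilon_spec.
  set (z := - y). assert (Hz : 0 < z) by (unfold z; lra).
  (* [e^v > v^2/4] makes [v e^{-v} < z] for [v = 4/z + 1]. *)
  set (v := 4 / z + 1).
  assert (Hzv : z * v = 4 + z) by (unfold v; field; lra).
  assert (Hv : 1 < v) by (unfold v; assert (0 < 4 / z) by (apply Rdiv_lt_0_compat; lra); lra).
  assert (Hsq : v * v / 4 < exp v).
  { replace (exp v) with (exp (v / 2) * exp (v / 2))
      by (rewrite <- exp_plus; f_equal; field).
    pose proof (exp_ineq1_le (v / 2)); nra. }
  assert (Hyv : y < - v * exp (- v)).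
  { rewrite exp_Ropp. pose proof (exp_pos v).
    apply Rmult_lt_reg_r with (exp v); auto.
    replace (- v * / exp v * exp v) with (- v) by (field; lra).
    unfold z in *; nra. }
  assert (Hcont : continuity (fun w => y - w * exp w)) by reg.
  destruct (IVT _ (- v) (-1) Hcont) as [w [Hw Hfw]]; [lra | lra | lra |].
  exists w; lra.
Qed.

Lemma ln_sub_le x y : 0 < x -> 0 < y -> ln x - ln y <= x / y - 1.
Proof.
  intros Hx Hy.
  assert (Hxy : 0 < x / y) by (apply Rdiv_lt_0_compat; lra).
  replace x with (x / y * y) at 1 by (field; lra).
  rewrite ln_mult by lra.
  pose proof (exp_ineq1_le (ln (x / y))) as Hexp. rewrite exp_ln in Hexp; lra.
Qed.

Lemma odds_le_iff l t : 0 < l < 1 -> 0 < t -> l / (1 - l) <= t <-> l <= t / (1 + t).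
Proof.
  intros Hl Ht.
  assert (Ho : l / (1 - l) * (1 - l) = l) by (field; lra).
  assert (Hq : t / (1 + t) * (1 + t) = t) by (field; lra).
  split; intro H; nra.
Qed.

Lemma le_odds_iff l t : 0 < l < 1 -> 0 < t -> t <= l / (1 - l) <-> t / (1 + t) <= l.
Proof.
  intros Hl Ht.
  assert (Ho : l / (1 - l) * (1 - l) = l) by (field; lra).
  assert (Hq : t / (1 + t) * (1 + t) = t) by (field; lra).
  split; intro H; nra.
Qed.

Definition mrc_snr (m c l : R) : R := 1 + m + c * l / (1 - l).

Definition mrc_rate (b m c l : R) : R := l * b + (1 - l) * ln (mrc_snr m c l).

(* Derivative of [mrc_rate b m c] at [l]. *)
Definition mrc_rate_slope (b m c l : R) : R :=
  b + 1 - ln (mrc_snr m c l) + (c - (1 + m)) / mrc_snr m c l.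

Section MrcRate.

Variables b m c : R.
Hypotheses (hm : 0 <= m) (hc : 0 < c).

Lemma mrc_snr_le l l' : 0 <= l <= l' -> l' < 1 -> mrc_snr m c l <= mrc_snr m c l'.
Proof.
  intros Hl Hl'. unfold mrc_snr.
  assert (l / (1 - l) <= l' / (1 - l')).
  { apply Rmult_le_reg_r with ((1 - l) * (1 - l')); [nra|].
    field_simplify; nra. }
  unfold Rdiv in *; nra.
Qed.

Lemma mrc_snr_ge l : 0 <= l < 1 -> 1 + m <= mrc_snr m c l.
Proof.
  intro Hl. replace (1 + m) with (mrc_snr m c 0) by (unfold mrc_snr; field).
  apply mrc_snr_le; lra.
Qed.

Lemma mrc_rate_tangent l mu : 0 <= l < 1 -> 0 <= mu < 1 ->
  mrc_rate b m c l <= mrc_rate b m c mu + (l - mu) * mrc_rate_slope b m c mu.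
Proof.
  intros Hl Hmu.
  pose proof (mrc_snr_ge l Hl). pose proof (mrc_snr_ge mu Hmu).
  assert (Hid : (1 - l) * (mrc_snr m c l / mrc_snr m c mu - 1)
                = (l - mu) * (1 + (c - (1 + m)) / mrc_snr m c mu)).
  { unfold mrc_snr in *. field. split; [lra | split; [nra | lra]]. }
  assert (Hln := ln_sub_le (mrc_snr m c l) (mrc_snr m c mu) ltac:(lra) ltac:(lra)).
  apply Rmult_le_compat_l with (r := 1 - l) in Hln; [|lra].
  unfold mrc_rate, mrc_rate_slope. nra.
Qed.

Lemma mrc_rate_slope_antitone mu nu : 0 <= mu <= nu -> nu < 1 ->
  mrc_rate_slope b m c nu <= mrc_rate_slope b m c mu.
Proof.
  intros Hmu Hnu.
  set (X := mrc_snr m c mu). set (Y := mrc_snr m c nu).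
  assert (HX : 1 + m <= X) by (apply mrc_snr_ge; lra).
  assert (HXY : X <= Y) by (apply mrc_snr_le; lra).
  pose proof (ln_sub_le X Y ltac:(lra) ltac:(lra)).
  (* the difference is at most [(X - Y) (X + c - 1 - m) / (X Y) <= 0] *)
  assert (Hd : X / Y - 1 + (c - (1 + m)) / Y - (c - (1 + m)) / X
               = (X - Y) * (X + c - (1 + m)) / (X * Y)) by (field; lra).
  assert ((X - Y) * (X + c - (1 + m)) / (X * Y) <= 0).
  { assert (0 < / (X * Y)) by (apply Rinv_0_lt_compat; nra).
    assert ((X - Y) * (X + c - (1 + m)) <= 0) by nra.
    unfold Rdiv; nra. }
  unfold mrc_rate_slope; fold X Y. lra.
Qed.

Lemma mrc_rate_le_of_slope_eq0 mu l : 0 <= mu < 1 -> 0 <= l < 1 ->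
  mrc_rate_slope b m c mu = 0 -> mrc_rate b m c l <= mrc_rate b m c mu.
Proof.
  intros Hmu Hl H0. pose proof (mrc_rate_tangent l mu Hl Hmu). rewrite H0 in *. lra.
Qed.

Lemma mrc_rate_antitone_of_slope_nonpos mu l l' : 0 <= mu <= l -> l <= l' -> l' < 1 ->
  mrc_rate_slope b m c mu <= 0 -> mrc_rate b m c l' <= mrc_rate b m c l.
Proof.
  intros Hmu Hl Hl' Hs.
  assert (Hsl : mrc_rate_slope b m c l <= 0)
    by (pose proof (mrc_rate_slope_antitone mu l ltac:(lra) ltac:(lra)); lra).
  pose proof (mrc_rate_tangent l' l ltac:(lra) ltac:(lra)).
  assert ((l' - l) * mrc_rate_slope b m c l <= 0) by nra.
  lra.
Qed.

End MrcRate.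

Lemma mrc_rate_slope_LambertW0 m c E lam : 0 <= m -> 0 < c ->
  E = exp (LambertW0 ((c - (1 + m)) / exp (1 + ln (1 + m))) + ln (1 + m) + 1) ->
  lam = (E - (1 + m)) / (E + c - (1 + m)) ->
  0 < lam < 1 /\ mrc_rate_slope (ln (1 + m)) m c lam = 0.
Proof.
  intros hm hc HE Hlam.
  set (b := ln (1 + m)) in *.
  set (y := (c - (1 + m)) / exp (1 + b)) in *.
  assert (He1b : exp (1 + b) = exp 1 * (1 + m))
    by (rewrite exp_plus; unfold b; rewrite exp_ln; lra).
  pose proof (exp_pos 1) as He1.
  assert (Hy : - exp (-1) < y).
  { assert (y + exp (-1) = c / (exp 1 * (1 + m))).
    { replace (exp (-1)) with (/ exp 1) by (rewrite <- exp_Ropp; f_equal; lra).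
      unfold y; rewrite He1b; field; lra. }
    assert (0 < c / (exp 1 * (1 + m))) by (apply Rdiv_lt_0_compat; nra).
    lra. }
  destruct (LambertW0_spec y Hy) as [Hw Hwy].
  set (w := LambertW0 y) in *.
  assert (HlnE : ln E = w + b + 1) by (rewrite HE; apply ln_exp).
  assert (HmE : 1 + m < E).
  { replace (1 + m) with (exp b) by (unfold b; apply exp_ln; lra).
    rewrite HE; apply exp_increasing; lra. }
  assert (HcE : (c - (1 + m)) / E = w).
  { assert (HEw : E = exp w * exp (1 + b)) by (rewrite HE, <- exp_plus; f_equal; ring).
    assert (Hy' : c - (1 + m) = y * exp (1 + b)) by (unfold y; field; apply Rgt_not_eq, exp_pos).
    rewrite HEw, Hy', <- Hwy. field. split; apply Rgt_not_eq, exp_pos. }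
  assert (HsnrE : mrc_snr m c lam = E) by (unfold mrc_snr; rewrite Hlam; field; lra).
  split.
  - rewrite Hlam. split; [apply Rdiv_lt_0_compat; lra |].
    apply Rmult_lt_reg_r with (E + c - (1 + m)); [lra |]. field_simplify; lra.
  - unfold mrc_rate_slope. rewrite HsnrE, HlnE, HcE. ring.
Qed.

Definition mrc_gap (a m c t : R) : R := ln (1 + m + c * t) - a * t.

Lemma mrc_rate_sub_line b m c CSR l : l < 1 ->
  mrc_rate b m c l - l * CSR = (1 - l) * mrc_gap (CSR - b) m c (l / (1 - l)).
Proof.
  intro Hl. unfold mrc_rate, mrc_snr, mrc_gap.
  replace (c * l / (1 - l)) with (c * (l / (1 - l))) by (field; lra).
  field; lra.
Qed.

Section MrcGap.

Variables a m c : R.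
Hypotheses (hm : 0 <= m) (hc : 0 < c).

Lemma mrc_gap_tangent s t : 0 <= s -> 0 <= t ->
  mrc_gap a m c s <= mrc_gap a m c t + (s - t) * (c / (1 + m + c * t) - a).
Proof.
  intros Hs Ht.
  assert (Hst : (1 + m + c * s) / (1 + m + c * t) - 1 = (s - t) * (c / (1 + m + c * t)))
    by (field; nra).
  pose proof (ln_sub_le (1 + m + c * s) (1 + m + c * t) ltac:(nra) ltac:(nra)).
  unfold mrc_gap; nra.
Qed.

Lemma mrc_gap_nonneg_between t1 t : mrc_gap a m c t1 = 0 -> 0 <= t <= t1 ->
  0 <= mrc_gap a m c t.
Proof.
  intros Hroot Ht.
  assert (Hgap0 : 0 <= mrc_gap a m c 0).
  { unfold mrc_gap. rewrite Rmult_0_r, Rmult_0_r, Rplus_0_r, Rminus_0_r.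
    destruct (Req_dec m 0) as [-> | Hm0]; [rewrite Rplus_0_r, ln_1; lra |].
    left; rewrite <- ln_1; apply ln_increasing; lra. }
  pose proof (mrc_gap_tangent 0 t ltac:(lra) ltac:(lra)) as T0.
  pose proof (mrc_gap_tangent t1 t ltac:(lra) ltac:(lra)) as T1.
  set (D := c / (1 + m + c * t) - a) in *.
  (* the convex combination [t1 * T0 + t * T1] cancels the slope [D] *)
  assert ((t1 - t) * (mrc_gap a m c 0 - mrc_gap a m c t) <= (t1 - t) * ((0 - t) * D))
    by (apply Rmult_le_compat_l; lra).
  assert (t * (mrc_gap a m c t1 - mrc_gap a m c t) <= t * ((t1 - t) * D))
    by (apply Rmult_le_compat_l; lra).
  assert ((t1 - t) * mrc_gap a m c 0 <= t1 * mrc_gap a m c t) by (rewrite Hroot in *; nra).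
  destruct (Req_dec t 0) as [-> | Ht0]; [lra |].
  assert (0 <= t1 * mrc_gap a m c t) by nra.
  nra.
Qed.

Lemma mrc_gap_nonpos_after t1 t : mrc_gap a m c t1 = 0 -> c <= a * (1 + m + c * t1) ->
  0 <= t1 <= t -> mrc_gap a m c t <= 0.
Proof.
  intros Hroot Hslope Ht.
  pose proof (mrc_gap_tangent t t1 ltac:(lra) ltac:(lra)) as T.
  assert (c / (1 + m + c * t1) <= a).
  { apply Rmult_le_reg_r with (1 + m + c * t1); [nra |]. field_simplify; nra. }
  nra.
Qed.

End MrcGap.

Lemma mrc_gap_root_LambertWm1 a m c t : 0 < a -> 0 < m -> 0 < c ->
  t = - (1 / a) * LambertWm1 (- (a / c) * exp (- (a * (1 + m) / c))) - (1 + m) / c ->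
  0 < t /\ mrc_gap a m c t = 0 /\ c <= a * (1 + m + c * t).
Proof.
  intros ha hm hc Ht.
  set (s := a * (1 + m) / c) in *.
  assert (hs : 0 < s) by (unfold s; apply Rdiv_lt_0_compat; nra).
  assert (Hac : 0 < a / c) by (apply Rdiv_lt_0_compat; lra).
  assert (Has : a / c < s)
    by (unfold s; replace (a * (1 + m) / c) with (a / c + a / c * m) by (field; lra); nra).
  assert (Hy : - exp (-1) < - (a / c) * exp (- s) < 0).
  { pose proof (exp_pos (- s)).
    (* [s e^{-s} <= e^{-1}] since [e^{s-1} >= s] *)
    assert (s * exp (- s) <= exp (-1)).
    { replace (exp (-1)) with (exp (s + -1) * exp (- s))
        by (rewrite <- exp_plus; f_equal; ring).
      pose proof (exp_ineq1_le (s + -1)). nra. }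
    nra. }
  destruct (LambertWm1_spec _ Hy) as [HW HWy].
  set (W := LambertWm1 (- (a / c) * exp (- s))) in *.
  set (X := 1 + m + c * t).
  assert (HX : X = - (c / a) * W) by (unfold X; rewrite Ht; field; lra).
  assert (Hc : c <= a * X) by (rewrite HX; field_simplify; nra).
  assert (HexpX : exp (a * t) = X).
  { replace (a * t) with (- W + - s) by (rewrite Ht; unfold s; field; lra).
    rewrite exp_plus, HX.
    replace (exp (- s)) with (- (c / a) * (W * exp W)) by (rewrite HWy; field; lra).
    replace (exp (- W)) with (/ exp W) by (rewrite exp_Ropp; reflexivity).
    field. split; [lra | apply Rgt_not_eq, exp_pos]. }
  assert (Hroot : mrc_gap a m c t = 0)
    by (unfold mrc_gap; fold X; rewrite <- HexpX, ln_exp; ring).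
  repeat split; auto.
  (* if [t <= 0], then [1 + a t <= e^{a t} = X] together with [c <= a X] forces [m <= 0] *)
  destruct (Rlt_or_le 0 t) as [| Hle]; [auto | exfalso].
  pose proof (exp_ineq1_le (- (a * t))) as Hexp.
  assert (exp (a * t) * exp (- (a * t)) = 1)
    by (rewrite exp_Ropp; field; apply Rgt_not_eq, exp_pos).
  rewrite HexpX in *.
  assert (0 < X) by (rewrite <- HexpX; apply exp_pos).
  unfold X in *. nra.
Qed.

Lemma line_le_mrc_rate b m c CSR t l : 0 <= m -> 0 < c -> 0 < t ->
  mrc_gap (CSR - b) m c t = 0 -> 0 < l < 1 -> l <= t / (1 + t) ->
  l * CSR <= mrc_rate b m c l.
Proof.
  intros hm hc ht Hroot Hl Hle.
  apply odds_le_iff in Hle; [| lra | lra].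
  assert (0 <= l / (1 - l)) by (left; apply Rdiv_lt_0_compat; lra).
  pose proof (mrc_gap_nonneg_between (CSR - b) m c hm hc t (l / (1 - l)) Hroot ltac:(lra)).
  pose proof (mrc_rate_sub_line b m c CSR l ltac:(lra)).
  nra.
Qed.

Lemma mrc_rate_le_line b m c CSR t l : 0 <= m -> 0 < c -> 0 < t ->
  mrc_gap (CSR - b) m c t = 0 -> c <= (CSR - b) * (1 + m + c * t) ->
  0 < l < 1 -> t / (1 + t) <= l -> mrc_rate b m c l <= l * CSR.
Proof.
  intros hm hc ht Hroot Hslope Hl Hle.
  apply le_odds_iff in Hle; [| lra | lra].
  pose proof (mrc_gap_nonpos_after (CSR - b) m c hm hc t (l / (1 - l)) Hroot Hslope ltac:(lra)).
  pose proof (mrc_rate_sub_line b m c CSR l ltac:(lra)).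
  nra.
Qed.

Lemma Rmin_maximized_at_Rmax (f g : R -> R) (l1 l2 : R) :
  0 < l1 < 1 -> 0 < l2 < 1 ->
  (forall l l', 0 < l <= l' -> l' < 1 -> f l <= f l') ->
  (forall l, 0 < l < 1 -> l <= l1 -> f l <= g l) ->
  (forall l, 0 < l < 1 -> l1 <= l -> g l <= f l) ->
  (forall l, 0 < l < 1 -> g l <= g l2) ->
  (forall l l', l2 <= l <= l' -> l' < 1 -> g l' <= g l) ->
  forall l, 0 < l < 1 -> Rmin (f l) (g l) <= Rmin (f (Rmax l1 l2)) (g (Rmax l1 l2)).
Proof.
  intros Hl1 Hl2 Hf Hfg Hgf Hpeak Hg l Hl.
  pose proof (Rmin_l (f l) (g l)). pose proof (Rmin_r (f l) (g l)).
  destruct (Rle_or_lt l2 l1) as [H21 | H12].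
  - rewrite Rmax_left by lra.
    pose proof (Hfg l1 Hl1 (Rle_refl _)). pose proof (Hgf l1 Hl1 (Rle_refl _)).
    apply Rmin_glb; destruct (Rle_or_lt l l1).
    + pose proof (Hf l l1 ltac:(lra) ltac:(lra)). lra.
    + pose proof (Hg l1 l ltac:(lra) ltac:(lra)). lra.
    + pose proof (Hf l l1 ltac:(lra) ltac:(lra)). lra.
    + pose proof (Hg l1 l ltac:(lra) ltac:(lra)). lra.
  - rewrite Rmax_right by lra.
    rewrite (Rmin_right (f l2)) by (apply Hgf; lra).
    pose proof (Hpeak l Hl). lra.
Qed.

Theorem ps_objective_maxmin (CSR m c' : R) (hm : 0 < m) (hc : 0 < c')
  (hC : ln (1 + m) < CSR) :
  let b := ln (1 + m) in
  let a' := CSR - b in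
  let Wm := LambertWm1 (- (a' / c') * exp (- (a' * (1 + m) / c'))) in
  let lam1 := (- (1 / a') * Wm - (1 + m) / c') /
              (1 - (1 / a') * Wm - (1 + m) / c') in
  let E := exp (LambertW0 ((c' - (1 + m)) / exp (1 + b)) + b + 1) in
  let lam2 := (E - (1 + m)) / (E + c' - (1 + m)) in
  let lamstar := Rmax lam1 lam2 in
  0 < lamstar < 1 /\
  forall lam, 0 < lam < 1 ->
    ps_objective CSR b m c' lam <= ps_objective CSR b m c' lamstar.
Proof.
  intros b a' Wm lam1 E lam2 lamstar.
  assert (ha : 0 < a') by (unfold a', b; lra).
  assert (hb : 0 < b) by (unfold b; rewrite <- ln_1; apply ln_increasing; lra).
  pose (t1 := - (1 / a') * Wm - (1 + m) / c').
  destruct (mrc_gap_root_LambertWm1 a' m c' t1 ha hm hc eq_refl)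
    as (Ht1 & Hroot & Hslope).
  assert (Hlam1 : lam1 = t1 / (1 + t1)) by (unfold lam1, t1; f_equal; ring).
  assert (Hlam1b : 0 < lam1 < 1).
  { rewrite Hlam1. split; [apply Rdiv_lt_0_compat; lra |].
    apply Rmult_lt_reg_r with (1 + t1); [lra |]. field_simplify; lra. }
  destruct (mrc_rate_slope_LambertW0 m c' E lam2 ltac:(lra) hc eq_refl eq_refl)
    as [Hlam2 Hstat].
  fold b in Hstat.
  split.
  { split; [apply Rlt_le_trans with lam1; [lra | apply Rmax_l] | apply Rmax_lub_lt; lra]. }
  apply (Rmin_maximized_at_Rmax (fun l => l * CSR) (mrc_rate b m c') lam1 lam2 Hlam1b Hlam2).
  - intros l l' Hl Hl'. apply Rmult_le_compat_r; [unfold b in hb |]; lra.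
  - intros l Hl Hle. rewrite Hlam1 in Hle.
    exact (line_le_mrc_rate b m c' CSR t1 l ltac:(lra) hc Ht1 Hroot Hl Hle).
  - intros l Hl Hle. rewrite Hlam1 in Hle.
    exact (mrc_rate_le_line b m c' CSR t1 l ltac:(lra) hc Ht1 Hroot Hslope Hl Hle).
  - intros l Hl. apply mrc_rate_le_of_slope_eq0; [lra | exact hc | lra ..].
  - intros l l' Hl Hl'. apply (mrc_rate_antitone_of_slope_nonpos b m c' ltac:(lra) hc lam2); lra.
Qed.

Lemma CSD_lt_CSR_PS (PS HSR HSD sa2 sb2 sD2 rho : R)
  (hPS : 0 < PS) (hHSD : 0 < HSD) (hsa : 0 < sa2) (hsb : 0 < sb2)
  (hsD : sD2 = sa2 + sb2) (hH : HSR > HSD)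
  (hrho : 0 < rho < 1 - HSD * sb2 / (HSR * sD2 - HSD * sa2)) :
  ln (1 + PS * HSD / sD2) < ln (1 + (1 - rho) * PS * HSR / ((1 - rho) * sa2 + sb2)).
Proof.
  assert (hHSR : 0 < HSR) by lra.
  assert (hDen : 0 < HSR * sD2 - HSD * sa2) by (rewrite hsD; nra).
  assert (hq : HSD * sb2 < (1 - rho) * (HSR * sD2 - HSD * sa2)).
  { destruct hrho as [_ h].
    apply Rmult_lt_compat_r with (r := HSR * sD2 - HSD * sa2) in h; [| lra].
    replace ((1 - HSD * sb2 / (HSR * sD2 - HSD * sa2)) * (HSR * sD2 - HSD * sa2))
      with ((HSR * sD2 - HSD * sa2) - HSD * sb2) in h by (field; lra).
    lra. }
  assert (hr1 : rho < 1) by nra.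
  apply ln_increasing.
  - assert (0 < PS * HSD / sD2) by (apply Rdiv_lt_0_compat; nra). lra.
  - apply Rplus_lt_compat_l.
    assert (0 < sD2) by lra.
    assert (0 < (1 - rho) * sa2 + sb2) by nra.
    apply Rmult_lt_reg_r with (sD2 * ((1 - rho) * sa2 + sb2)); [nra |].
    field_simplify; [| lra | lra].
    rewrite hsD in hq |- *. nra.
Qed.

Theorem corollary2
  (PS HSR HSD HRD sa2 sb2 sR2 sD2 eta rho : R)
  (hPS : 0 < PS) (hHSR : 0 < HSR) (hHSD : 0 < HSD) (hHRD : 0 < HRD)
  (hsa : 0 < sa2) (hsb : 0 < sb2)
  (heta : 0 < eta <= 1)
  (hsR : sR2 = sa2 + sb2) (hsD : sD2 = sa2 + sb2)
  (hH : HSR > HSD)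
  (hrho : 0 < rho < 1 - HSD * sb2 / (HSR * sD2 - HSD * sa2)) :
  let CSR := ln (1 + (1 - rho) * PS * HSR / ((1 - rho) * sa2 + sb2)) in
  let m := PS * HSD / sD2 in
  let b := ln (1 + m) in
  let a' := CSR - b in
  let c' := eta * rho * HSR * HRD * PS / sD2 in
  let Wm := LambertWm1 (- (a' / c') * exp (- (a' * (1 + m) / c'))) in
  let lam1 := (- (1 / a') * Wm - (1 + m) / c') /
              (1 - (1 / a') * Wm - (1 + m) / c') in
  let E := exp (LambertW0 ((c' - (1 + m)) / exp (1 + b)) + b + 1) in
  let lam2 := (E - (1 + m)) / (E + c' - (1 + m)) in
  let lamstar := Rmax lam1 lam2 in
  0 < lamstar < 1 /\
  forall lam, 0 < lam < 1 ->
    ps_objective CSR b m c' lam <= ps_objective CSR b m c' lamstar.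
Proof.
  intros CSR m b a' c'.
  assert (hD : 0 < sD2) by lra.
  apply ps_objective_maxmin.
  - apply Rdiv_lt_0_compat; nra.
  - apply Rdiv_lt_0_compat; [| lra].
    repeat apply Rmult_lt_0_compat; lra.
  - exact (CSD_lt_CSR_PS PS HSR HSD sa2 sb2 sD2 rho hPS hHSD hsa hsb hsD hH hrho).
Qed.
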